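(* Let $(\Lambda,d)$ be a finitely aligned $k$-graph. Then $\Lambda$ satisfies condition (A) — for each $v\in\Lambda^0$ there exists $x\in\partial\Lambda$ with $r(x)=v$ such that for all $m,n\in\mathbb N^k$ with $m,n\le d(x)$, $\sigma^m x=\sigma^n x$ implies $m=n$ — if and only if the groupoid ${\mathcal G}_\Lambda|_{\partial\Lambda}$ is essentially free.
   Context: A $k$-graph $(\Lambda,d)$ is a countable small category $\Lambda$ (objects identified with identity morphisms) with a functor $d:\Lambda\to\mathbb N^k$ satisfying unique factorization: whenever $d(\lambda)=m+n$ there are unique $\mu,\nu$ with $d(\mu)=m$, $d(\nu)=n$, $\lambda=\mu\nu$. $\Lambda^0=d^{-1}(0)$, $r,s$ range/source, $v\Lambda=r^{-1}(v)$. $\Lambda^{\min}(\lambda,\mu)=\{(\alpha,\beta):\lambda\alpha=\mu\beta,\ d(\lambda\alpha)=d(\lambda)\vee d(\mu)\}$; finitely aligned means all are finite. $E\subseteq v\Lambda$ is exhaustive if every $\mu\in v\Lambda$ has some $\lambda\in E$ with $\Lambda^{\min}(\lambda,\mu)\ne\emptyset$; $v\mathrm{FE}(\Lambda)$ = finite exhaustive subsets. $S_\Lambda$: finite $F\subseteq\{(\lambda,\mu):s(\lambda)=s(\mu)\}$ with distinct $(\lambda,\mu),(\nu,\omega)\in F$ satisfying $\Lambda^{\min}(\lambda,\nu)=\Lambda^{\min}(\mu,\omega)=\emptyset$; inverse semigroup with $FG=\bigcup_{(\lambda,\mu)\in F,(\xi,\eta)\in G}\{(\lambda\alpha,\eta\beta):(\alpha,\beta)\in\Lambda^{\min}(\mu,\xi)\}$,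 $F^*=\{(\mu,\lambda):(\lambda,\mu)\in F\}$, idempotents $E(S_\Lambda)$. $\Omega_{k,m}$ ($m\in(\mathbb N\cup\{\infty\})^k$): objects $\{p\in\mathbb N^k:p\le m\}$, morphisms $(p,q)$, $p\le q\le m$, $r(p,q)=p$, $s(p,q)=q$, $d(p,q)=q-p$. $X_\Lambda$ = degree-preserving functors $x:\Omega_{k,m}\to\Lambda$, $d(x)=m$, $r(x)=x(0,0)$, $x(n)=x(n,n)$; $\sigma^m x:\Omega_{k,d(x)-m}\to\Lambda$, $(p,q)\mapsto x(p+m,q+m)$; $\lambda x$ ($s(\lambda)=x(0,0)$) has $(\lambda x)(0,n)=\lambda x(0,n-d(\lambda))$. $D_F=\{x:\exists(\lambda,\mu)\in F,\ x(0,d(\mu))=\mu\}$; $\theta_F(x)=\lambda\sigma^{d(\mu)}x$; $X_\Lambda$ has the topology with subbasis $\{D_F,X_\Lambda\setminus D_F\}$. ${\mathcal G}_\Lambda$: germs $[F,x]$ ($x\in D_F$) under $(F,x)\sim(G,y)$ iff $x=y$ and some $P\in E(S_\Lambda)$ has $x\in D_P$, $FP=GP$; product $[F,\theta_G(x)][G,x]=[FG,x]$, inverse $[F^*,\theta_F(x)]$, $r([F,x])=\theta_F(x)$, $s([F,x])=x$; unit space identified with $X_\Lambda$; topology with subbasis $\{\Psi(F),{\mathcal G}_\Lambda\setminus\Psi(F)\}$, $\Psi(F)=\{[F,x]:x\in D_F\}$. A boundary path is $x\in X_\Lambda$ such that for all $n\le d(x)$ and $E\in x(n)\mathrm{FE}(\Lambda)$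 some $\lambda\in E$ has $x(n,n+d(\lambda))=\lambda$; $\partial\Lambda$ = boundary paths (a closed invariant subset of the unit space). ${\mathcal G}_\Lambda|_{\partial\Lambda}=\{g:r(g),s(g)\in\partial\Lambda\}$ with the relative topology. A groupoid is essentially free if the set of units with trivial isotropy group is dense in the unit space. *)

From mathcomp Require Import all_boot.
From Stdlib Require Import List.

Set Implicit Arguments.
Unset Strict Implicit.
Unset Printing Implicit Defensive.

Definition Nk (k : nat) := {ffun 'I_k -> nat}.
(* None encodes infinity *)
Definition Ninf (k : nat) := {ffun 'I_k -> option nat}.

Definition zeroN k : Nk k := [ffun _ => 0].
Definition addN k (m n : Nk k) : Nk k := [ffun i => m i + n i].
(* truncated subtraction; only used when n <= m *)
Definition subN k (m n : Nk k) : Nk k := [ffun i => m i - n i].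
Definition joinN k (m n : Nk k) : Nk k := [ffun i => maxn (m i) (n i)].
Definition leN k (m n : Nk k) : bool := [forall i, m i <= n i].
Definition leNI k (p : Nk k) (m : Ninf k) : bool :=
  [forall i, if m i is Some a then p i <= a else true].
Definition addNI k (p : Nk k) (m : Ninf k) : Ninf k :=
  [ffun i => omap (addn (p i)) (m i)].
(* m - p, with oo - a = oo; only used when p <= m *)
Definition subIN k (m : Ninf k) (p : Nk k) : Ninf k :=
  [ffun i => omap (fun a => a - p i) (m i)].

(* k-graphs: countable small categories (objects = identity morphisms) *)
(* The composition kc is total; kc a b is meaningful when ks a = kr b. *)
Record kgraph (k : nat) : Type := KGraph {
  kmor :> Type;
  kr : kmor -> kmor;
  ks : kmor -> kmor;
  kc : kmor -> kmor -> kmor;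
  kd : kmor -> Nk k;
  kg_countable : exists f : kmor -> nat, injective f;
  kg_r_obj : forall a, kr (kr a) = kr a /\ ks (kr a) = kr a;
  kg_s_obj : forall a, ks (ks a) = ks a /\ kr (ks a) = ks a;
  kg_id_l : forall a, kc (kr a) a = a;
  kg_id_r : forall a, kc a (ks a) = a;
  kg_comp_r : forall a b, ks a = kr b -> kr (kc a b) = kr a;
  kg_comp_s : forall a b, ks a = kr b -> ks (kc a b) = ks b;
  kg_assoc : forall a b c, ks a = kr b -> ks b = kr c ->
               kc (kc a b) c = kc a (kc b c);
  kg_deg : forall a b, ks a = kr b -> kd (kc a b) = addN (kd a) (kd b);
  kg_fact : forall l (m n : Nk k), kd l = addN m n ->
     exists mu nu, [/\ kd mu = m, kd nu = n, ks mu = kr nu & l = kc mu nu] /\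
       forall mu' nu', kd mu' = m -> kd nu' = n -> ks mu' = kr nu' ->
         l = kc mu' nu' -> mu' = mu /\ nu' = nu
}.

Arguments kr {k L} _ : rename.
Arguments ks {k L} _ : rename.
Arguments kc {k L} _ _ : rename.
Arguments kd {k L} _ : rename.

Section KGraphDefs.
Variables (k : nat) (L : kgraph k).

Definition Lmin (lam mu : L) (ab : L * L) : Prop :=
  let (a, b) := ab in
  [/\ ks lam = kr a, ks mu = kr b, kc lam a = kc mu b &
      kd (kc lam a) = joinN (kd lam) (kd mu)].

Definition finitely_aligned : Prop :=
  forall lam mu : L, exists s : list (L * L),
    forall ab, Lmin lam mu ab -> List.In ab s.

Definition finite_exhaustive (v : L) (E : list L) : Prop :=
  (forall lam, List.In lam E -> kr lam = v) /\
  (forall mu : L, kr mu = v ->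
     exists lam, List.In lam E /\ exists ab, Lmin lam mu ab).

(* Paths: degree preserving functors Omega_{k,m} -> Lambda.            *)
(* pm p q is the image of the morphism (p,q); values outside p<=q<=m   *)
(* are irrelevant junk, so paths are compared with [peq].              *)
Record kpath := KPath { pd : Ninf k; pm : Nk k -> Nk k -> L }.

Definition is_path (x : kpath) : Prop :=
  (forall p q, leN p q -> leNI q (pd x) ->
     [/\ kd (pm x p q) = subN q p, kr (pm x p q) = pm x p p &
         ks (pm x p q) = pm x q q]) /\
  (forall p q r, leN p q -> leN q r -> leNI r (pd x) ->
     pm x p r = kc (pm x p q) (pm x q r)).

Definition peq (x y : kpath) : Prop :=
  pd x = pd y /\
  forall p q, leN p q -> leNI q (pd x) -> pm x p q = pm y p q.

Definition prange (x : kpath) : L := pm x (zeroN k) (zeroN k).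

Definition shift (m : Nk k) (x : kpath) : kpath :=
  KPath (subIN (pd x) m) (fun p q => pm x (addN p m) (addN q m)).

(* y = lam z : d(y) = d(lam) + d(z), and (lam z)(0,n) = lam z(0, n - d(lam))
   for d(lam) <= n <= d(y) (this determines the functor). *)
Definition concat (lam : L) (z y : kpath) : Prop :=
  [/\ ks lam = prange z, pd y = addNI (kd lam) (pd z) &
      forall n, leN (kd lam) n -> leNI n (pd y) ->
        pm y (zeroN k) n = kc lam (pm z (zeroN k) (subN n (kd lam)))].

(* The inverse semigroup S_Lambda (elements as finite sets of pairs)   *)
Definition pairset := L * L -> Prop.

Definition inS (F : pairset) : Prop :=
  [/\ exists s : list (L * L), forall ab, F ab -> List.In ab s,
      forall lam mu, F (lam, mu) -> ks lam = ks mu &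
      forall lam mu nu om, F (lam, mu) -> F (nu, om) -> (lam, mu) <> (nu, om) ->
        (forall ab, ~ Lmin lam nu ab) /\ (forall ab, ~ Lmin mu om ab)].

Definition prodS (F G : pairset) : pairset := fun ab =>
  exists lam mu xi eta a b,
    [/\ F (lam, mu), G (xi, eta), Lmin mu xi (a, b) &
        ab = (kc lam a, kc eta b)].

Definition idempotent (P : pairset) : Prop :=
  inS P /\ forall ab, prodS P P ab <-> P ab.

Definition inD (F : pairset) (x : kpath) : Prop :=
  exists lam mu, [/\ F (lam, mu), leNI (kd mu) (pd x) &
                     pm x (zeroN k) (kd mu) = mu].

Definition theta_rel (F : pairset) (x y : kpath) : Prop :=
  exists lam mu, [/\ F (lam, mu), leNI (kd mu) (pd x),
                     pm x (zeroN k) (kd mu) = mu &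
                     concat lam (shift (kd mu) x) y].

(* The groupoid of germs G_Lambda: germs [F,x] with F in S_Lambda,     *)
(* x in D_F, modulo (F,x) ~ (G,y) iff x = y and FP = GP for some       *)
(* idempotent P with x in D_P.                                         *)
Definition germ_eq (F : pairset) (x : kpath) (G : pairset) (y : kpath) : Prop :=
  peq x y /\ exists P, [/\ idempotent P, inD P x &
                           forall ab, prodS F P ab <-> prodS G P ab].

(* the isotropy group at x is trivial: every germ [F,x] with
   r([F,x]) = theta_F(x) = x  and s([F,x]) = x is a unit [P,x], P in E(S_Lambda) *)
Definition trivial_isotropy (x : kpath) : Prop :=
  forall F, inS F -> inD F x -> theta_rel F x x ->
    exists P, [/\ idempotent P, inD P x & germ_eq F x P x].

Definition is_boundary (x : kpath) : Prop :=
  is_path x /\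
  forall n, leNI n (pd x) -> forall E, finite_exhaustive (pm x n n) E ->
    exists lam, List.In lam E /\ leNI (addN n (kd lam)) (pd x) /\
                pm x n (addN n (kd lam)) = lam.

(* Topology on X_Lambda: subbasis {D_F, X \ D_F : F in S_Lambda}.      *)
Definition in_subbasic (B : pairset * bool) (x : kpath) : Prop :=
  if B.2 then inD B.1 x else ~ inD B.1 x.

Definition in_basic (Bs : list (pairset * bool)) (x : kpath) : Prop :=
  forall B, List.In B Bs -> in_subbasic B x.

Definition is_open (U : kpath -> Prop) : Prop :=
  forall x, is_path x -> U x ->
    exists Bs : list (pairset * bool),
      (forall B, List.In B Bs -> inS B.1) /\ in_basic Bs x /\
      forall y, is_path y -> in_basic Bs y -> U y.

(* G_Lambda|_{partial Lambda} is essentially free: the units with trivial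
   isotropy are dense in its unit space partial Lambda (relative topology),
   i.e. every nonempty relatively open subset of partial Lambda contains a
   unit with trivial isotropy. *)
Definition boundary_groupoid_essentially_free : Prop :=
  forall U, is_open U -> (exists x, is_boundary x /\ U x) ->
    exists x, [/\ is_boundary x, U x & trivial_isotropy x].

Definition conditionA : Prop :=
  forall v : L, kd v = zeroN k ->
    exists x, [/\ is_boundary x, prange x = v &
      forall m n : Nk k, leNI m (pd x) -> leNI n (pd x) ->
        peq (shift m x) (shift n x) -> m = n].

End KGraphDefs.

(* Aperiodic paths have trivial isotropy: a germ [F, x] fixing [x] comes from
   some [(lam, mu)] in [F] with [lam sigma^d(lam) x = x = mu sigma^d(mu) x], so
   [sigma^d(lam) x = sigma^d(mu) x]; aperiodicity forces [lam = mu], and the germ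
   is the unit [[{(mu, mu)}, x]].  Conversely, if [sigma^m x = sigma^n x] then the
   germ [[{(x(0,m), x(0,n))}, x]] fixes [x], and it is a unit only if [m = n].
   Hence essential freeness, applied to the open sets [D_{(v,v)}], gives (A);
   these sets meet the boundary because a chain of extensions of [v] that answers
   every pair [(n, E)] infinitely often converges to a boundary path.
   For the converse, a basic open set containing a boundary path [x0] contains
   every boundary path [mu ga z] where [mu] is a long enough initial segment of
   [x0] and [ga] has no common extension with the finitely many minimal
   extensions of [mu] into the excluded sets [D_F]; such a [ga] exists since a
   finite set that [x0] avoids is not exhaustive.  Taking [z] aperiodic, as (A)
   allows, makes [mu ga z] aperiodic. *)

From Stdlib Require Import ClassicalEpsilon Classical Cantor.
From Pilot Require Import Defs.
From mathcomp Require Import all_boot zify.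

Set Implicit Arguments.
Unset Strict Implicit.
Unset Printing Implicit Defensive.

Ltac epsilon_intro :=
  match goal with |- context [epsilon ?i ?P] => apply: (epsilon_spec i P) end.

Section DegreeOrder.
Variable k : nat.
Implicit Types (m n p q : Nk k) (d : Ninf k).

Lemma leNP m n : reflect (forall i, m i <= n i) (leN m n).
Proof. exact: forallP. Qed.

Lemma leNIP p d :
  reflect (forall i, if d i is Some a then p i <= a else true) (leNI p d).
Proof. exact: forallP. Qed.

Lemma eqNP m n : (forall i, m i = n i) -> m = n.
Proof. by move=> H; apply/ffunP. Qed.

Lemma eqN_at m n : m = n -> forall i, m i = n i.
Proof. by move=> ->. Qed.

Ltac nk_lia := let i := fresh "i" in apply: eqNP => i; rewrite ?ffunE /=; lia.

Lemma addNC m n : addN m n = addN n m. Proof. nk_lia. Qed.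
Lemma addNA m n p : addN m (addN n p) = addN (addN m n) p. Proof. nk_lia. Qed.
Lemma add0N m : addN (zeroN k) m = m. Proof. nk_lia. Qed.
Lemma addNKl m n : subN (addN m n) m = n. Proof. nk_lia. Qed.
Lemma subNn m : subN m m = zeroN k. Proof. nk_lia. Qed.
Lemma subN0 m : subN m (zeroN k) = m. Proof. nk_lia. Qed.
Lemma joinNn m : joinN m m = m. Proof. nk_lia. Qed.
Lemma joinNC m n : joinN m n = joinN n m. Proof. nk_lia. Qed.

Lemma subNK m n : leN m n -> addN m (subN n m) = n.
Proof. move=> /leNP H; apply: eqNP => i; rewrite !ffunE; have := H i; lia. Qed.

Lemma addN_inj m n n' : addN m n = addN m n' -> n = n'.
Proof. move=> H; apply: eqNP => i; have := eqN_at H i; rewrite !ffunE; lia. Qed.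

Lemma addN_injr m n n' : addN n m = addN n' m -> n = n'.
Proof. by rewrite !(addNC _ m); apply: addN_inj. Qed.

Lemma addN_eq0 m n : addN m n = m -> n = zeroN k.
Proof. move=> H; apply: eqNP => i; have := eqN_at H i; rewrite !ffunE; lia. Qed.

Lemma leNn m : leN m m. Proof. by apply/leNP. Qed.
Lemma le0N m : leN (zeroN k) m. Proof. by apply/leNP => i; rewrite ffunE. Qed.

Lemma leN_trans m n p : leN m n -> leN n p -> leN m p.
Proof. move=> /leNP H1 /leNP H2; apply/leNP => i; exact: leq_trans (H1 i) (H2 i). Qed.

Lemma leN_anti m n : leN m n -> leN n m -> m = n.
Proof. move=> /leNP H1 /leNP H2; apply: eqNP => i; have := H1 i; have := H2 i; lia. Qed.

Lemma leN_addr m n : leN m (addN m n). Proof. apply/leNP => i; rewrite ffunE; lia. Qed.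
Lemma leN_addl m n : leN n (addN m n). Proof. apply/leNP => i; rewrite ffunE; lia. Qed.
Lemma leN_joinl m n : leN m (joinN m n). Proof. apply/leNP => i; rewrite ffunE; lia. Qed.
Lemma leN_joinr m n : leN n (joinN m n). Proof. apply/leNP => i; rewrite ffunE; lia. Qed.

Lemma leN_add2r m n p : leN n p -> leN (addN n m) (addN p m).
Proof. move=> /leNP H; apply/leNP => i; rewrite !ffunE; have := H i; lia. Qed.

Lemma joinN_le m n p : leN m p -> leN n p -> leN (joinN m n) p.
Proof.
move=> /leNP H1 /leNP H2; apply/leNP => i; rewrite !ffunE; have := H1 i; have := H2 i; lia.
Qed.

Lemma leNI_trans p q d : leN p q -> leNI q d -> leNI p d.
Proof.
move=> /leNP H1 /leNIP H2; apply/leNIP => i; have := H1 i; have := H2 i.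
by case: (d i) => //= a; lia.
Qed.

Lemma leNI0 d : leNI (zeroN k) d.
Proof. by apply/leNIP => i; rewrite ffunE; case: (d i). Qed.

Lemma leNI_join p q d : leNI p d -> leNI q d -> leNI (joinN p q) d.
Proof.
move=> /leNIP H1 /leNIP H2; apply/leNIP => i; have := H1 i; have := H2 i; rewrite ffunE.
by case: (d i) => //= a; lia.
Qed.

Lemma leNI_addNI p d : leNI p (addNI p d).
Proof. by apply/leNIP => i; rewrite ffunE; case: (d i) => //= a; lia. Qed.

Lemma leNI_subN p m d : leNI p (addNI m d) -> leNI (subN p m) d.
Proof.
move=> /leNIP H; apply/leNIP => i; have := H i; rewrite !ffunE.
by case: (d i) => //= a; lia.
Qed.

Lemma leNI_subIN m q d : leNI m d -> leNI q (subIN d m) = leNI (addN q m) d.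
Proof.
move=> /leNIP H; apply/leNIP/leNIP => H2 i; have := H i; have := H2 i;
  rewrite !ffunE; case: (d i) => //= a; lia.
Qed.

End DegreeOrder.

Section Factorisation.
Variables (k : nat) (L : kgraph k).
Implicit Types (a b c d l : L) (m n p q r : Nk k).

Lemma kr_ks a : kr (ks a) = ks a. Proof. exact: (proj2 (kg_s_obj a)). Qed.
Lemma ks_kr a : ks (kr a) = kr a. Proof. exact: (proj2 (kg_r_obj a)). Qed.

Lemma kd_kr a : kd (kr a) = zeroN k.
Proof.
have := kg_deg (ks_kr a); rewrite kg_id_l => E.
by apply: (@addN_eq0 _ (kd a)); rewrite addNC -E.
Qed.

Lemma kd_ks a : kd (ks a) = zeroN k.
Proof.
have := kg_deg (esym (kr_ks a)); rewrite kg_id_r => E.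
by apply: (@addN_eq0 _ (kd a)); rewrite -E.
Qed.

Lemma kd_kc a b : ks a = kr b -> kd (kc a b) = addN (kd a) (kd b).
Proof. exact: kg_deg. Qed.

Lemma leN_kc a b : ks a = kr b -> leN (kd a) (kd (kc a b)).
Proof. by move=> H; rewrite kd_kc //; apply: leN_addr. Qed.

Lemma factorisation_uniq a b a' b' : ks a = kr b -> ks a' = kr b' ->
  kc a b = kc a' b' -> kd a = kd a' -> a = a' /\ b = b'.
Proof.
move=> Hab Hab' E Ed.
have Edb : kd b' = kd b.
  by apply: (@addN_inj _ (kd a)); rewrite {1}Ed -!kd_kc // E.
have [mu [nu [_ Hu]]] := kg_fact (kd_kc Hab).
have [-> ->] := Hu a b erefl erefl Hab erefl.
by have [-> ->] := Hu a' b' (esym Ed) Edb Hab' E.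
Qed.

Lemma kd_eq0 a : kd a = zeroN k -> kr a = a /\ ks a = a.
Proof.
move=> H.
have E : kc (kr a) a = kc a (ks a) by rewrite kg_id_l kg_id_r.
have [] := factorisation_uniq (ks_kr a) (esym (kr_ks a)) E _; first by rewrite kd_kr H.
by move=> -> <-.
Qed.

Lemma kc_deg0r a b : ks a = kr b -> kd b = zeroN k -> kc a b = a.
Proof. by move=> H /kd_eq0[Hr _]; rewrite -Hr -H kg_id_r. Qed.

Lemma kc_fixed_deg0 a b : ks a = kr b -> kc a b = a -> kd b = zeroN k.
Proof. by move=> H E; apply: (@addN_eq0 _ (kd a)); rewrite -kd_kc // E. Qed.

(* [(l, l)] is a junk value: [pre l m] and [suf l m] are meaningful only for
   [m <= d(l)]. *)
Definition split_at l m : L * L :=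
  epsilon (inhabits (l, l)) (fun pr => [/\ kd pr.1 = m, kd pr.2 = subN (kd l) m,
     ks pr.1 = kr pr.2 & l = kc pr.1 pr.2]).
Definition pre l m := (split_at l m).1.
Definition suf l m := (split_at l m).2.
Definition seg l p q := suf (pre l q) p.

Lemma split_atP l m : leN m (kd l) ->
  [/\ kd (pre l m) = m, kd (suf l m) = subN (kd l) m,
     ks (pre l m) = kr (suf l m) & l = kc (pre l m) (suf l m)].
Proof.
move=> H; rewrite /pre /suf /split_at; epsilon_intro.
have [mu [nu [[? ? ? ?] _]]] := kg_fact (esym (subNK H)).
by exists (mu, nu).
Qed.

Lemma kd_pre l m : leN m (kd l) -> kd (pre l m) = m.
Proof. by case/split_atP. Qed.
Lemma kd_suf l m : leN m (kd l) -> kd (suf l m) = subN (kd l) m.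
Proof. by case/split_atP. Qed.
Lemma ks_pre l m : leN m (kd l) -> ks (pre l m) = kr (suf l m).
Proof. by case/split_atP. Qed.
Lemma pre_suf l m : leN m (kd l) -> l = kc (pre l m) (suf l m).
Proof. by case/split_atP. Qed.

Lemma pre_suf_kc a b : ks a = kr b ->
  pre (kc a b) (kd a) = a /\ suf (kc a b) (kd a) = b.
Proof.
move=> H; have [H1 _ H3 H4] := split_atP (leN_kc H).
by have [-> ->] := factorisation_uniq H3 H (esym H4) H1.
Qed.

Lemma pre_kc a b : ks a = kr b -> pre (kc a b) (kd a) = a.
Proof. by case/pre_suf_kc. Qed.
Lemma suf_kc a b : ks a = kr b -> suf (kc a b) (kd a) = b.
Proof. by case/pre_suf_kc. Qed.

Lemma ks_suf l m : leN m (kd l) -> ks (suf l m) = ks l.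
Proof. by move=> H; rewrite {2}(pre_suf H) kg_comp_s // ks_pre. Qed.
Lemma kr_pre l m : leN m (kd l) -> kr (pre l m) = kr l.
Proof. by move=> H; rewrite {2}(pre_suf H) kg_comp_r // ks_pre. Qed.

Lemma pre_full l m : kd l = m -> pre l m = l.
Proof. by move=> <-; have := pre_kc (esym (kr_ks l)); rewrite kg_id_r. Qed.
Lemma suf_full l m : kd l = m -> suf l m = ks l.
Proof. by move=> <-; have := suf_kc (esym (kr_ks l)); rewrite kg_id_r. Qed.
Lemma suf0 l : suf l (zeroN k) = l.
Proof. by have := suf_kc (ks_kr l); rewrite kg_id_l kd_kr. Qed.

Lemma kc_pre_suf a b n : ks a = kr b -> leN n (kd a) ->
  kc a b = kc (pre a n) (kc (suf a n) b) /\ ks (pre a n) = kr (kc (suf a n) b).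
Proof.
move=> H Hn; split; last by rewrite ks_pre // kg_comp_r // ks_suf.
by rewrite -kg_assoc ?ks_pre ?ks_suf // -pre_suf.
Qed.

Lemma pre_kcl a b n : ks a = kr b -> leN n (kd a) -> pre (kc a b) n = pre a n.
Proof.
move=> H Hn; have [-> Hc] := kc_pre_suf H Hn.
by have := pre_kc Hc; rewrite kd_pre.
Qed.

Lemma suf_kcl a b n : ks a = kr b -> leN n (kd a) -> suf (kc a b) n = kc (suf a n) b.
Proof.
move=> H Hn; have [-> Hc] := kc_pre_suf H Hn.
by have := suf_kc Hc; rewrite kd_pre.
Qed.

Lemma pre_kcr a b n : ks a = kr b -> leN n (kd b) ->
  pre (kc a b) (addN (kd a) n) = kc a (pre b n).
Proof.
move=> H Hn.
have E : kc a b = kc (kc a (pre b n)) (suf b n).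
  by rewrite kg_assoc ?kr_pre ?ks_pre // -?pre_suf.
have Hc : ks (kc a (pre b n)) = kr (suf b n) by rewrite kg_comp_s ?kr_pre // ks_pre.
by have := pre_kc Hc; rewrite kd_kc ?kr_pre // kd_pre // -E.
Qed.

Lemma pre_pre l p q : leN p q -> leN q (kd l) -> pre (pre l q) p = pre l p.
Proof. by move=> Hpq Hq; rewrite {2}(pre_suf Hq) pre_kcl ?ks_pre ?kd_pre. Qed.

Lemma suf_pre_suf l p q : leN p q -> leN q (kd l) ->
  suf l p = kc (suf (pre l q) p) (suf l q).
Proof. by move=> Hpq Hq; rewrite {1}(pre_suf Hq) suf_kcl ?ks_pre ?kd_pre. Qed.

Lemma kd_seg l p q : leN p q -> leN q (kd l) -> kd (seg l p q) = subN q p.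
Proof. by move=> H1 H2; rewrite /seg kd_suf kd_pre. Qed.

Lemma seg_pre_suf l p q : leN p q -> leN q (kd l) -> seg l p q = pre (suf l p) (subN q p).
Proof.
move=> H1 H2.
have Hp : leN p (kd (pre l q)) by rewrite kd_pre.
rewrite (suf_pre_suf H1 H2) -(kd_seg H1 H2) pre_kc //.
by rewrite /seg ks_suf // ks_pre.
Qed.

Lemma kc_seg l p q r : leN p q -> leN q r -> leN r (kd l) ->
  kc (seg l p q) (seg l q r) = seg l p r.
Proof.
move=> H1 H2 H3.
by rewrite /seg -(pre_pre H2 H3) -suf_pre_suf // kd_pre.
Qed.

Lemma kr_seg l p q : leN p q -> leN q (kd l) -> kr (seg l p q) = seg l p p.
Proof.
move=> H1 H2; have Hp := leN_trans H1 H2.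
rewrite /seg -ks_pre ?kd_pre // pre_pre // suf_full // kd_pre //.
Qed.

Lemma ks_seg l p q : leN p q -> leN q (kd l) -> ks (seg l p q) = seg l q q.
Proof. by move=> H1 H2; rewrite /seg ks_suf ?kd_pre // suf_full // kd_pre. Qed.

Lemma seg0 l q : seg l (zeroN k) q = pre l q.
Proof. by rewrite /seg suf0. Qed.

Lemma Lmin_deg a b c d : Lmin a b (c, d) ->
  addN (kd a) (kd c) = joinN (kd a) (kd b) /\ addN (kd b) (kd d) = joinN (kd a) (kd b).
Proof. by case=> H1 H2 H3 H4; rewrite -!kd_kc // -H3. Qed.

Lemma Lmin_sym a b c d : Lmin a b (c, d) -> Lmin b a (d, c).
Proof. by case=> H1 H2 H3 H4; split; rewrite // -H3 H4 joinNC. Qed.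

Lemma common_ext_Lmin a b c d : ks a = kr c -> ks b = kr d -> kc a c = kc b d ->
  exists c1 d1 e, [/\ Lmin a b (c1, d1), ks d1 = kr e & d = kc d1 e].
Proof.
move=> Hac Hbd E.
set w := kc a c; set m := joinN (kd a) (kd b).
have Ha : leN (kd a) (kd w) by apply: leN_kc.
have Hb : leN (kd b) (kd w) by rewrite /w E; apply: leN_kc.
have Hm : leN m (kd w) by apply: joinN_le.
set p := pre w m.
have Hpa : pre p (kd a) = a by rewrite /p pre_pre ?leN_joinl // /w pre_kc.
have Hpb : pre p (kd b) = b by rewrite /p pre_pre ?leN_joinr // /w E pre_kc.
have Ha' : leN (kd a) (kd p) by rewrite kd_pre // leN_joinl.
have Hb' : leN (kd b) (kd p) by rewrite kd_pre // leN_joinr.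
exists (suf p (kd a)), (suf p (kd b)), (suf w m); split.
- split.
  + by rewrite -{1}Hpa ks_pre.
  + by rewrite -{1}Hpb ks_pre.
  + by rewrite -{1}Hpa -pre_suf // -{1}Hpb -pre_suf.
  + by rewrite -{1}Hpa -pre_suf // kd_pre.
- by rewrite ks_suf // /p ks_pre.
- by rewrite -[d](suf_kc Hbd) -E (suf_pre_suf (leN_joinr _ _) Hm).
Qed.

Lemma common_ext_Lmin_ex a b c d : ks a = kr c -> ks b = kr d -> kc a c = kc b d ->
  exists ab, Lmin a b ab.
Proof.
by move=> Hac Hbd E; have [c1 [d1 [_ [H _ _]]]] := common_ext_Lmin Hac Hbd E; exists (c1, d1).
Qed.

End Factorisation.

Section Paths.
Variables (k : nat) (L : kgraph k).
Implicit Types (a b c l lam mu : L) (m n p q r : Nk k) (x y z : kpath L).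

Notation "0" := (zeroN k).

Lemma path_deg x p q : is_path x -> leN p q -> leNI q (pd x) -> kd (pm x p q) = subN q p.
Proof. by case=> H _ Hpq Hq; case: (H p q Hpq Hq). Qed.
Lemma path_r x p q : is_path x -> leN p q -> leNI q (pd x) -> kr (pm x p q) = pm x p p.
Proof. by case=> H _ Hpq Hq; case: (H p q Hpq Hq). Qed.
Lemma path_s x p q : is_path x -> leN p q -> leNI q (pd x) -> ks (pm x p q) = pm x q q.
Proof. by case=> H _ Hpq Hq; case: (H p q Hpq Hq). Qed.
Lemma path_comp x p q r : is_path x -> leN p q -> leN q r -> leNI r (pd x) ->
  pm x p r = kc (pm x p q) (pm x q r).
Proof. by case=> _ H; apply: H. Qed.

Lemma path_deg0 x q : is_path x -> leNI q (pd x) -> kd (pm x 0 q) = q.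
Proof. by move=> Hx Hq; rewrite path_deg ?le0N // subN0. Qed.

Lemma path_sr x p q r : is_path x -> leN p q -> leN q r -> leNI r (pd x) ->
  ks (pm x p q) = kr (pm x q r).
Proof. by move=> Hx H1 H2 H3; rewrite path_s ?path_r //; apply: leNI_trans H3. Qed.

Lemma pre_path x p q r : is_path x -> leN p q -> leN q r -> leNI r (pd x) ->
  pre (pm x p r) (subN q p) = pm x p q.
Proof.
move=> Hx H1 H2 H3; rewrite (path_comp Hx H1 H2 H3).
by have := pre_kc (path_sr Hx H1 H2 H3); rewrite path_deg //; apply: leNI_trans H3.
Qed.

Lemma pre_path0 x p q : is_path x -> leN p q -> leNI q (pd x) ->
  pre (pm x 0 q) p = pm x 0 p.
Proof. by move=> Hx Hpq Hq; have := pre_path Hx (le0N p) Hpq Hq; rewrite subN0. Qed.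

Lemma path_seg x p q : is_path x -> leN p q -> leNI q (pd x) ->
  pm x p q = seg (pm x 0 q) p q.
Proof.
move=> Hx Hpq Hq; rewrite /seg pre_full ?path_deg0 //.
rewrite (path_comp Hx (le0N p) Hpq Hq).
by have := suf_kc (path_sr Hx (le0N p) Hpq Hq); rewrite path_deg0 //; apply: leNI_trans Hq.
Qed.

Lemma peq_prefixes x y : is_path x -> is_path y -> pd x = pd y ->
  (forall n, leNI n (pd x) -> pm x 0 n = pm y 0 n) -> peq x y.
Proof.
move=> Hx Hy Hd H; split => // p q Hpq Hq.
by rewrite path_seg // (path_seg Hy Hpq) ?H // -Hd.
Qed.

Lemma peq_refl x : peq x x.
Proof. by split. Qed.
Lemma peq_sym x y : peq x y -> peq y x.
Proof. by case=> Hd H; split=> // p q Hpq Hq; rewrite H // Hd. Qed.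
Lemma peq_trans x y z : peq x y -> peq y z -> peq x z.
Proof.
case=> Hd H [Hd' H']; split; first by rewrite Hd.
by move=> p q Hpq Hq; rewrite H // H' // -Hd.
Qed.

Definition begins_with x mu := leNI (kd mu) (pd x) /\ pm x 0 (kd mu) = mu.

Lemma begins_with_common_ext y a b : is_path y -> begins_with y a -> begins_with y b ->
  exists c d, [/\ ks a = kr c, ks b = kr d & kc a c = kc b d].
Proof.
move=> Hy [Ha Ea] [Hb Eb]; set t := joinN (kd a) (kd b).
have Ht : leNI t (pd y) by apply: leNI_join.
exists (pm y (kd a) t), (pm y (kd b) t); split.
- by rewrite -{1}Ea (path_sr Hy (le0N _) (leN_joinl _ _) Ht).
- by rewrite -{1}Eb (path_sr Hy (le0N _) (leN_joinr _ _) Ht).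
- by rewrite -{1}Ea -{1}Eb -!path_comp ?le0N ?leN_joinl ?leN_joinr.
Qed.

Lemma begins_with_Lmin y a b : is_path y -> begins_with y a -> begins_with y b ->
  exists ab, Lmin a b ab.
Proof.
move=> Hy Ha Hb; have [c [d [Hc Hd E]]] := begins_with_common_ext Hy Ha Hb.
exact: common_ext_Lmin_ex Hc Hd E.
Qed.

Lemma begins_with_pre y rho p : is_path y -> begins_with y rho -> leN p (kd rho) ->
  begins_with y (pre rho p).
Proof.
move=> Hy [Hr Er] Hp; rewrite /begins_with kd_pre //; split; first exact: leNI_trans Hr.
by rewrite -Er pre_path0.
Qed.

Section PrefixPath.
Variables (P : Nk k -> L) (D : Ninf k).
Hypothesis kd_P : forall n, leNI n D -> kd (P n) = n.
Hypothesis pre_P : forall n m, leN n m -> leNI m D -> pre (P m) n = P n.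

Definition prefix_path := KPath D (fun p q => seg (P q) p q).

Lemma prefix_path_is_path : is_path prefix_path.
Proof.
have Hq q : leNI q D -> leN q (kd (P q)) by move=> ?; rewrite kd_P // leNn.
split.
- move=> p q Hpq HqD /=; have Hp := leNI_trans Hpq HqD.
  by rewrite kd_seg ?kr_seg ?ks_seg ?Hq // /seg !pre_P ?leNn.
- move=> p q r Hpq Hqr Hr /=; have Hq' := leNI_trans Hqr Hr.
  rewrite -(kc_seg Hpq Hqr (Hq r Hr)); congr kc.
  by rewrite /seg !pre_P ?leNn.
Qed.

Lemma prefix_path0 n : leNI n D -> pm prefix_path 0 n = P n.
Proof. by move=> Hn /=; rewrite seg0 pre_full // kd_P. Qed.

End PrefixPath.

Lemma shift_is_path x m : is_path x -> leNI m (pd x) -> is_path (shift m x).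
Proof.
move=> Hx Hm; split.
- move=> p q Hpq /=; rewrite leNI_subIN // => Hq.
  have Hpq' : leN (addN p m) (addN q m) by apply: leN_add2r.
  have Hp' := leNI_trans Hpq' Hq.
  split; [|exact: path_r|exact: path_s].
  by rewrite path_deg //; apply: eqNP => i; rewrite !ffunE; lia.
- move=> p q r Hpq Hqr /=; rewrite leNI_subIN // => Hr.
  by apply: path_comp => //; apply: leN_add2r.
Qed.

Lemma shift_shift x (a b : Nk k) : peq (shift a (shift b x)) (shift (addN a b) x).
Proof.
split=> [|p q _ _ /=]; last by rewrite -!addNA.
by apply/ffunP => i; rewrite !ffunE; case: (pd x i) => //= c; congr Some; lia.
Qed.

Lemma peq_shift x y s : leNI s (pd x) -> peq x y -> peq (shift s x) (shift s y).
Proof.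
move=> Hs [Hd H]; split; first by rewrite /= Hd.
by move=> p q Hpq /=; rewrite leNI_subIN // => Hq; apply: H => //; apply: leN_add2r.
Qed.

Lemma prange_shift x m : prange (shift m x) = pm x m m.
Proof. by rewrite /prange /= add0N. Qed.

Lemma concat_begins_with lam z y : concat lam z y -> begins_with y lam.
Proof.
case=> H1 H2 H3.
have Hl : leNI (kd lam) (pd y) by rewrite H2 leNI_addNI.
by split => //; rewrite H3 ?leNn // subNn -/(prange z) -H1 kg_id_r.
Qed.

Lemma concat_shift lam z y : is_path z -> is_path y -> concat lam z y ->
  peq (shift (kd lam) y) z.
Proof.
move=> Hz Hy Hc; have [Hl _] := concat_begins_with Hc.
case: Hc => H1 H2 H3.
have Hpd : subIN (pd y) (kd lam) = pd z.
  by rewrite H2; apply/ffunP => i; rewrite !ffunE; case: (pd z i) => //= a; congr Some; lia.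
apply: peq_prefixes => //; first exact: shift_is_path.
move=> n; rewrite /= Hpd => Hn; rewrite add0N.
have Hn' : leNI (addN n (kd lam)) (pd y) by rewrite -leNI_subIN // Hpd.
have Esub : subN (addN n (kd lam)) (kd lam) = n by rewrite addNC addNKl.
have Hc : ks lam = kr (pm z 0 n) by rewrite H1 path_r ?le0N.
have Hdw : kd (kc lam (pm z 0 n)) = addN n (kd lam) by rewrite kd_kc // path_deg0 // addNC.
rewrite path_seg ?leN_addl // H3 ?leN_addl // Esub.
by rewrite seg_pre_suf ?Hdw ?leNn ?leN_addl // suf_kc // Esub pre_full // path_deg0.
Qed.

End Paths.

Section Prepend.
Variables (k : nat) (L : kgraph k).
Implicit Types (lam : L) (m n : Nk k) (z : kpath L).

Notation "0" := (zeroN k).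

Definition prepend_deg lam n := subN (joinN n (kd lam)) (kd lam).
Definition prepend_long lam z n := kc lam (pm z 0 (prepend_deg lam n)).
(* [(lam z)(0, n)] is cut out of [lam z(0, (n \/ d(lam)) - d(lam))], which is
   long enough whether or not [n] lies above [d(lam)]. *)
Definition prepend lam z :=
  prefix_path (fun n => pre (prepend_long lam z n) n) (addNI (kd lam) (pd z)).

Variables (lam : L) (z : kpath L).
Hypothesis Hz : is_path z.
Hypothesis Hlz : ks lam = prange z.

Lemma prepend_deg_le n : leNI n (addNI (kd lam) (pd z)) -> leNI (prepend_deg lam n) (pd z).
Proof. by move=> H; apply/leNI_subN/leNI_join => //; apply: leNI_addNI. Qed.

Lemma prepend_long_comp n : leNI n (addNI (kd lam) (pd z)) ->
  ks lam = kr (pm z 0 (prepend_deg lam n)).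
Proof. by move=> H; rewrite Hlz path_r ?le0N ?prepend_deg_le. Qed.

Lemma kd_prepend_long n : leNI n (addNI (kd lam) (pd z)) ->
  kd (prepend_long lam z n) = joinN n (kd lam).
Proof.
move=> H; rewrite /prepend_long kd_kc; last exact: prepend_long_comp.
by rewrite path_deg0 ?prepend_deg_le // subNK // leN_joinr.
Qed.

Lemma kd_pre_prepend_long n : leNI n (addNI (kd lam) (pd z)) ->
  kd (pre (prepend_long lam z n) n) = n.
Proof. by move=> H; rewrite kd_pre // kd_prepend_long // leN_joinl. Qed.

Lemma pre_prepend_long n m : leN n m -> leNI m (addNI (kd lam) (pd z)) ->
  pre (prepend_long lam z m) (joinN n (kd lam)) = prepend_long lam z n.
Proof.
move=> Hnm Hm; have Hn := leNI_trans Hnm Hm.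
have Hmono : leN (prepend_deg lam n) (prepend_deg lam m).
  by move/leNP: Hnm => H; apply/leNP => i; rewrite !ffunE; have := H i; lia.
have Hdm : leN (prepend_deg lam n) (kd (pm z 0 (prepend_deg lam m))).
  by rewrite path_deg0 ?prepend_deg_le.
rewrite -(subNK (leN_joinr n (kd lam))) /prepend_long pre_kcr //; last exact: prepend_long_comp.
by rewrite pre_path0 ?prepend_deg_le.
Qed.

Lemma pre_pre_prepend_long n m : leN n m -> leNI m (addNI (kd lam) (pd z)) ->
  pre (pre (prepend_long lam z m) m) n = pre (prepend_long lam z n) n.
Proof.
move=> Hnm Hm; have Hn := leNI_trans Hnm Hm.
have Hjm : leN (joinN n (kd lam)) (kd (prepend_long lam z m)).
  rewrite kd_prepend_long //; apply: joinN_le; last exact: leN_joinr.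
  exact: leN_trans Hnm (leN_joinl _ _).
rewrite pre_pre ?kd_prepend_long ?leN_joinl //.
by rewrite -(pre_prepend_long Hnm Hm) pre_pre // leN_joinl.
Qed.

Lemma prepend_is_path : is_path (prepend lam z).
Proof. apply: prefix_path_is_path; [exact: kd_pre_prepend_long|exact: pre_pre_prepend_long]. Qed.

Lemma prepend_concat : concat lam z (prepend lam z).
Proof.
split => // n Hn Hn'.
rewrite /prepend (prefix_path0 kd_pre_prepend_long Hn').
have Ej : joinN n (kd lam) = n := leN_anti (joinN_le (leNn n) Hn) (leN_joinl _ _).
by rewrite pre_full ?kd_prepend_long // /prepend_long /prepend_deg Ej.
Qed.

Lemma prepend_shift : peq (shift (kd lam) (prepend lam z)) z.
Proof. exact: concat_shift Hz prepend_is_path prepend_concat. Qed.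

End Prepend.

Definition pfilter {A : Type} (P : A -> Prop) (s : list A) : list A :=
  List.filter (fun a => if excluded_middle_informative (P a) then true else false) s.

Lemma in_pfilter {A : Type} (P : A -> Prop) (s : list A) a :
  List.In a (pfilter P s) <-> List.In a s /\ P a.
Proof.
by rewrite /pfilter List.filter_In; case: excluded_middle_informative => H; split; case.
Qed.

Section Boundary.
Variables (k : nat) (L : kgraph k).
Hypothesis FA : finitely_aligned L.
Implicit Types (a b c l lam mu nu rho : L) (m n p q r t u : Nk k) (x y z : kpath L).
Implicit Types (E : list L).

Definition Lmin_list a b : list (L * L) :=
  epsilon (inhabits nil) (fun s => forall ab, Lmin a b ab -> List.In ab s).

Lemma in_Lmin_list a b ab : Lmin a b ab -> List.In ab (Lmin_list a b).
Proof. by move: ab; rewrite /Lmin_list; epsilon_intro; apply: FA. Qed.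

Definition min_exts lam E : list L :=
  pfilter (fun a => exists nu b, List.In nu E /\ Lmin lam nu (a, b))
    (List.flat_map (fun nu => List.map fst (Lmin_list lam nu)) E).

Lemma in_min_exts lam E a :
  List.In a (min_exts lam E) <-> exists nu b, List.In nu E /\ Lmin lam nu (a, b).
Proof.
rewrite in_pfilter; split=> [[]|[nu [b [Hnu Hm]]]] //; split; last by exists nu, b.
apply/List.in_flat_map; exists nu; split => //.
by apply/List.in_map_iff; exists (a, b); split => //; apply: in_Lmin_list.
Qed.

Lemma min_exts_exhaustive rho E :
  finite_exhaustive (kr rho) E -> finite_exhaustive (ks rho) (min_exts rho E).
Proof.
move=> [_ HE]; split.
  by move=> be /in_min_exts [nu [al [_ [H _ _ _]]]]; rewrite -H.
move=> ga Hga; have Hc : ks rho = kr ga by rewrite Hga.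
have [l [Hl [[al bb] [Hm1 Hm2 Hm3 _]]]] := HE (kc rho ga) (kg_comp_r Hc).
rewrite kg_comp_s // in Hm2.
have E3 : kc l al = kc rho (kc ga bb) by rewrite Hm3 kg_assoc.
have Hc' : ks rho = kr (kc ga bb) by rewrite kg_comp_r.
have [c1 [d1 [e [Hm He Ede]]]] := common_ext_Lmin Hm1 Hc' E3.
exists d1; split; first by apply/in_min_exts; exists l, c1; split => //; apply: Lmin_sym.
by apply: (common_ext_Lmin_ex (c := e) (d := bb)); rewrite // -Ede.
Qed.

Lemma path_kc_seg x n r a b : is_path x -> leN (addN n (kd a)) r -> leNI r (pd x) ->
  ks a = kr b -> pm x n r = kc a b -> pm x n (addN n (kd a)) = a.
Proof.
move=> Hx Hr HrD Hab E.
by rewrite -(pre_path Hx (leN_addr _ _) Hr HrD) E addNKl pre_kc.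
Qed.

Lemma prepend_boundary lam z : is_boundary z -> ks lam = prange z ->
  is_boundary (prepend lam z).
Proof.
move=> [Hz Bz] Hlz; set y := prepend lam z.
have Hy : is_path y := prepend_is_path Hz Hlz.
have [Hdsh Ysh] := prepend_shift Hz Hlz.
have {}Hdsh : subIN (pd y) (kd lam) = pd z := Hdsh.
have Yz p q : leN p q -> leNI q (pd z) -> pm y (addN p (kd lam)) (addN q (kd lam)) = pm z p q.
  by move=> Hpq Hq; apply: Ysh; rewrite //= Hdsh.
have Hlam : leNI (kd lam) (pd y) by apply: leNI_addNI.
split => // n Hn E HE.
set t := joinN n (kd lam); set u := subN t (kd lam).
have Etu : addN u (kd lam) = t by rewrite addNC subNK // leN_joinr.
have Ht : leNI t (pd y) by apply: leNI_join.
have Hu : leNI u (pd z) by rewrite -Hdsh leNI_subIN // Etu.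
have Hnt : leN n t by apply: leN_joinl.
set rho := pm y n t.
have Hrho_r : kr rho = pm y n n by rewrite path_r.
have Hrho_s : ks rho = pm z u u by rewrite path_s // -Etu Yz ?leNn.
have HExt : finite_exhaustive (pm z u u) (min_exts rho E).
  by rewrite -Hrho_s; apply: min_exts_exhaustive; rewrite Hrho_r.
have [be [/in_min_exts [l [al [Hl Hmin]]] [Hube Ebe]]] := Bz u Hu _ HExt.
have [Hd1 Hd2] := Lmin_deg Hmin.
case: Hmin => Hm1 Hm2 Hm3 Hm4.
exists l; split => //.
set r := addN t (kd be).
have Er : addN (addN u (kd be)) (kd lam) = r by rewrite /r -Etu -!addNA (addNC (kd be)).
have Hr : leNI r (pd y) by rewrite -Er -leNI_subIN // Hdsh.
have Ey : pm y n r = kc l al.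
  rewrite (path_comp Hy Hnt (leN_addr _ _) Hr) -/rho -Hm3; congr kc.
  by rewrite -[in RHS]Ebe -(Yz _ _ (leN_addr _ _) Hube) Etu Er.
have Hq : leN (addN n (kd l)) r.
  apply/leNP => i; have /leNP/(_ i) := Hnt.
  have := eqN_at Hd1 i; have := eqN_at Hd2 i; have := eqN_at (path_deg Hy Hnt Ht : kd rho = _) i.
  by rewrite /r !ffunE; lia.
split; first exact: leNI_trans Hq Hr.
exact: path_kc_seg Hy Hq Hr Hm2 Ey.
Qed.

(* Otherwise [E] would be exhaustive at [x(n)], and [x] would pass through it. *)
Lemma boundary_avoid x n E : is_boundary x -> leNI n (pd x) ->
  (forall a, List.In a E -> kr a = pm x n n) ->
  (forall a, List.In a E -> leNI (addN n (kd a)) (pd x) -> pm x n (addN n (kd a)) <> a) ->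
  exists ga, kr ga = pm x n n /\ forall a, List.In a E -> forall ab, ~ Lmin a ga ab.
Proof.
move=> [_ Bx] Hn Hr Hav; apply: NNPP => Hne.
have HFE : finite_exhaustive (pm x n n) E.
  split => // mu Hmu; apply: NNPP => Hno; apply: Hne; exists mu; split => //.
  by move=> a Ha ab Hab; apply: Hno; exists a; split => //; exists ab.
have [a [Ha [Hle Ea]]] := Bx n Hn E HFE.
exact: Hav a Ha Hle Ea.
Qed.

End Boundary.

Lemma bounded_argmax (a : nat -> nat) B : (forall j, a j <= B) ->
  exists J, forall j, a j <= a J.
Proof.
elim: B => [|B IH] H; first by exists 0 => j; have := H j; lia.
case: (classic (exists j, a j = B.+1)) => [[J HJ]|Hn].
  by exists J => j; rewrite HJ; apply: H.
apply: IH => j; have := H j; rewrite leq_eqVlt => /orP [/eqP E|//].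
by case: Hn; exists j.
Qed.

Section BoundaryExistence.
Variables (k : nat) (L : kgraph k).
Implicit Types (a b l lam : L) (m n p q : Nk k).

(* A request [(n, E)], with [E] coded by naturals, asks the path to pass at [n]
   through the finite set [E]; the enumeration lists every request infinitely often. *)
Definition request_at (j : nat) : option (Nk k * seq nat) :=
  unpickle (Cantor.of_nat j).1.

Lemma request_at_often t N : exists j, N <= j /\ request_at j = Some t.
Proof.
exists (Cantor.to_nat (pickle t, N)); split.
  by have := Cantor.to_nat_non_decreasing (pickle t) N => /leP; lia.
by rewrite /request_at Cantor.cancel_of_to /= pickleK.
Qed.

Variable v : L.

Definition code : L -> nat :=
  epsilon (inhabits (fun _ => 0%N)) (fun f : L -> nat => injective f).

Lemma code_inj : injective code.
Proof. by rewrite /code; epsilon_intro; apply: kg_countable. Qed.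

Definition decode (c : nat) : L := epsilon (inhabits v) (fun l => code l = c).

Lemma map_decode_code (E : seq L) : map decode (map code E) = E.
Proof.
elim: E => //= a E ->; congr cons; apply: code_inj; rewrite /decode.
by epsilon_intro; exists a.
Qed.

Definition chain_ext l n (E : seq L) : L :=
  epsilon (inhabits l) (fun be => exists l' al, List.In l' E /\ Lmin l' (suf l n) (al, be)).

Definition chain_step (j : nat) (l : L) : L :=
  match request_at j with
  | Some (n, codes) =>
      if leN n (kd l) then
        if excluded_middle_informative (finite_exhaustive (seg l n n) (map decode codes))
        then kc l (chain_ext l n (map decode codes)) else l
      else l
  | None => l
  end.

Fixpoint chain (j : nat) : L := if j is j'.+1 then chain_step j' (chain j') else v.

Lemma chain_extP l n (E : seq L) : leN n (kd l) -> finite_exhaustive (seg l n n) E ->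
  exists l' al, List.In l' E /\ Lmin l' (suf l n) (al, chain_ext l n E).
Proof.
move=> Hn [_ HE]; rewrite /chain_ext; epsilon_intro.
have Hr : kr (suf l n) = seg l n n by rewrite -ks_pre // /seg suf_full // kd_pre.
have [l' [Hl' [[al be] Hm]]] := HE _ Hr.
by exists be, l', al.
Qed.

Lemma chain_step_ext j l : exists be, ks l = kr be /\ chain_step j l = kc l be.
Proof.
have Hid : ks l = kr (ks l) /\ l = kc l (ks l) by rewrite kr_ks kg_id_r.
rewrite /chain_step; case: (request_at j) => [[n codes]|]; last by exists (ks l).
case: ifP => Hn; last by exists (ks l).
case: excluded_middle_informative => HF; last by exists (ks l).
exists (chain_ext l n (map decode codes)); split => //.
by have [l' [al [_ [_ <- _ _]]]] := chain_extP Hn HF; rewrite ks_suf.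
Qed.

Lemma chain_mono i j : i <= j ->
  leN (kd (chain i)) (kd (chain j)) /\ pre (chain j) (kd (chain i)) = chain i.
Proof.
elim: j => [|j IH] Hij.
  by rewrite (_ : i = 0) ?leNn ?pre_full //; lia.
case: (ltngtP i j.+1) => Hc; [|lia|by rewrite Hc leNn pre_full].
have [H1 H2] := IH (ltnSE Hc).
rewrite /=; have [be [Hb ->]] := chain_step_ext j (chain j).
by rewrite pre_kcl //; split; first exact: leN_trans H1 (leN_kc Hb).
Qed.

Lemma chain_step_meets j n codes : request_at j = Some (n, codes) ->
  leN n (kd (chain j)) -> finite_exhaustive (seg (chain j) n n) (map decode codes) ->
  exists l', [/\ List.In l' (map decode codes),
    leN (addN n (kd l')) (kd (chain j.+1)) & seg (chain j.+1) n (addN n (kd l')) = l'].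
Proof.
move=> Hreq Hn HF.
have -> : chain j.+1 = kc (chain j) (chain_ext (chain j) n (map decode codes)).
  by rewrite /= /chain_step Hreq Hn; case: excluded_middle_informative.
set l := chain j in Hn HF *.
have [l' [al [Hl' Hm]]] := chain_extP Hn HF.
move: Hm; set be := chain_ext l n _ => Hm.
have [Hd1 Hd2] := Lmin_deg Hm.
case: Hm => Hm1 Hm2 Hm3 Hm4.
have Hb : ks l = kr be by rewrite -Hm2 ks_suf.
have Hle : leN (addN n (kd l')) (kd (kc l be)).
  rewrite kd_kc //; apply/leNP => i; have /leNP/(_ i) := Hn.
  have := eqN_at Hd1 i; have := eqN_at Hd2 i; have := eqN_at (kd_suf Hn) i.
  by rewrite !ffunE; lia.
exists l'; split => //.
by rewrite seg_pre_suf ?leN_addr // suf_kcl // -Hm3 addNKl pre_kc.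
Qed.

Definition chain_deg (i : 'I_k) (j : nat) : nat := kd (chain j) i.

Definition chain_deg_argmax (i : 'I_k) : nat :=
  epsilon (inhabits 0%N) (fun J => forall j, chain_deg i j <= chain_deg i J).

Lemma chain_deg_argmaxP i : (exists B, forall j, chain_deg i j <= B) ->
  forall j, chain_deg i j <= chain_deg i (chain_deg_argmax i).
Proof. by case=> B HB; rewrite /chain_deg_argmax; epsilon_intro; apply: bounded_argmax HB. Qed.

Definition chain_lim_deg : Ninf k := [ffun i =>
  if excluded_middle_informative (exists B, forall j, chain_deg i j <= B)
  then Some (chain_deg i (chain_deg_argmax i)) else None].

Lemma leNI_chain_lim_deg q : leNI q chain_lim_deg <-> exists j, leN q (kd (chain j)).
Proof.
split; last first.
  case=> j /leNP Hj; apply/leNIP => i; rewrite ffunE.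
  case: excluded_middle_informative => Hb //=.
  exact: leq_trans (Hj i) (chain_deg_argmaxP Hb j).
move/leNIP => H.
have Hi i : exists j, q i <= chain_deg i j.
  have := H i; rewrite ffunE; case: excluded_middle_informative => Hb /=.
    by exists (chain_deg_argmax i).
  move=> _; apply: NNPP => Hn; apply: Hb; exists (q i) => j.
  by case: (leqP (chain_deg i j) (q i)) => // Hlt; case: Hn; exists j; lia.
pose ji i := epsilon (inhabits 0%N) (fun j => q i <= chain_deg i j).
have Hji i : q i <= chain_deg i (ji i) by rewrite /ji; epsilon_intro; apply: Hi.
exists (\max_(i < k) ji i); apply/leNP => i.
apply: leq_trans (Hji i) _.
by have [/leNP + _] := chain_mono (@leq_bigmax _ ji i); apply.
Qed.

Definition chain_index n : nat := epsilon (inhabits 0%N) (fun j => leN n (kd (chain j))).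

Lemma chain_indexP n : leNI n chain_lim_deg -> leN n (kd (chain (chain_index n))).
Proof. by move/leNI_chain_lim_deg => H; rewrite /chain_index; epsilon_intro. Qed.

Lemma pre_chain_indep n j1 j2 : leN n (kd (chain j1)) -> leN n (kd (chain j2)) ->
  pre (chain j1) n = pre (chain j2) n.
Proof.
wlog H12 : j1 j2 / j1 <= j2 => [Hw H1 H2|H1 H2].
  by case: (leqP j1 j2) => Hc; [apply: Hw|symmetry; apply: Hw => //; lia].
by have [Hm Hp] := chain_mono H12; rewrite -{1}Hp pre_pre.
Qed.

Definition chain_prefix n := pre (chain (chain_index n)) n.

Lemma kd_chain_prefix n : leNI n chain_lim_deg -> kd (chain_prefix n) = n.
Proof. by move=> H; rewrite /chain_prefix kd_pre // chain_indexP. Qed.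

Lemma pre_chain_prefix n m : leN n m -> leNI m chain_lim_deg ->
  pre (chain_prefix m) n = chain_prefix n.
Proof.
move=> Hnm Hm; have Hn := leNI_trans Hnm Hm.
rewrite /chain_prefix pre_pre ?chain_indexP //.
by apply: pre_chain_indep; [apply: leN_trans Hnm (chain_indexP Hm)|apply: chain_indexP].
Qed.

Definition chain_lim := prefix_path chain_prefix chain_lim_deg.

Lemma chain_lim_seg j p q : leN p q -> leN q (kd (chain j)) ->
  pm chain_lim p q = seg (chain j) p q.
Proof.
move=> Hpq Hq; have Hq' : leNI q chain_lim_deg by apply/leNI_chain_lim_deg; exists j.
rewrite /= /seg (pre_full (kd_chain_prefix Hq')) /chain_prefix.
by rewrite (pre_chain_indep (chain_indexP Hq') Hq).
Qed.

Lemma prange_chain_lim : kd v = zeroN k -> prange chain_lim = v.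
Proof.
move=> kd_v.
by rewrite /prange (chain_lim_seg (j := 0)) ?leNn ?le0N //= seg0 pre_full.
Qed.

Lemma chain_lim_boundary : is_boundary chain_lim.
Proof.
split; first exact: prefix_path_is_path kd_chain_prefix pre_chain_prefix.
move=> n Hn E HE.
have [J HJ] := (leNI_chain_lim_deg n).1 Hn.
have [j [HJj Hreq]] := request_at_often (n, map code E) J.
have Hnj : leN n (kd (chain j)) by apply: leN_trans HJ (proj1 (chain_mono HJj)).
have HF : finite_exhaustive (seg (chain j) n n) (map decode (map code E)).
  by rewrite map_decode_code -(chain_lim_seg (leNn n) Hnj).
have [l' [Hl' Hle Hseg]] := chain_step_meets Hreq Hnj HF.
rewrite map_decode_code in Hl'.
exists l'; split => //; split; first by apply/leNI_chain_lim_deg; exists j.+1.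
by rewrite (chain_lim_seg (j := j.+1)) // leN_addr.
Qed.

End BoundaryExistence.

Lemma boundary_exists k (L : kgraph k) (v : L) : kd v = zeroN k ->
  exists x, is_boundary x /\ prange x = v.
Proof.
by move=> Hv; exists (chain_lim v); split; [apply: chain_lim_boundary|apply: prange_chain_lim].
Qed.

Section Isotropy.
Variables (k : nat) (L : kgraph k).
Implicit Types (a b c l lam mu nu : L) (m n p q s t : Nk k) (x y z : kpath L).
Implicit Types (F P : pairset L).

Definition single (ab : L * L) : pairset L := fun cd => cd = ab.

Lemma inS_single a b : ks a = ks b -> inS (single (a, b)).
Proof.
move=> H; split; first by exists [:: (a, b)] => ab ->; left.
  by move=> l m [-> ->].
by move=> l m n' o -> -> [].
Qed.

Lemma inS_Lmin_fst F lam1 mu1 lam2 mu2 ab : inS F -> F (lam1, mu1) -> F (lam2, mu2) ->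
  Lmin lam1 lam2 ab -> (lam1, mu1) = (lam2, mu2).
Proof.
case=> _ _ Hdisj H H' Hab; apply: NNPP => Hne.
by have [/(_ ab) + _] := Hdisj _ _ _ _ H H' Hne.
Qed.

Lemma inS_Lmin_snd F lam1 mu1 lam2 mu2 ab : inS F -> F (lam1, mu1) -> F (lam2, mu2) ->
  Lmin mu1 mu2 ab -> (lam1, mu1) = (lam2, mu2).
Proof.
case=> _ _ Hdisj H H' Hab; apply: NNPP => Hne.
by have [_ /(_ ab)] := Hdisj _ _ _ _ H H' Hne.
Qed.

Lemma idempotent_single a : Defs.idempotent (single (a, a)).
Proof.
split; first exact: inS_single.
move=> ab; split.
- case=> [l [m [xi [eta [a1 [b1 [[-> ->] [-> ->] [Hm1 Hm2 Hm3 Hm4] ->]]]]]]].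
  rewrite joinNn in Hm4.
  have Ha1 : kd a1 = zeroN k by apply: (@addN_eq0 _ (kd a)); rewrite -kd_kc.
  by rewrite /single -Hm3 kc_deg0r.
- move=> ->; exists a, a, a, a, (ks a), (ks a).
  by split => //; [split; rewrite ?kr_ks ?kg_id_r ?joinNn|rewrite kg_id_r].
Qed.

(* Write [(a, b)] as a product of two elements of [P] and use the disjointness
   built into [inS]. *)
Lemma idempotent_diag P a b : Defs.idempotent P -> P (a, b) -> a = b.
Proof.
move=> [HP HPP] Hab; have [_ Hsrc _] := HP.
have [lam [mu [xi [eta [a1 [b1 [H1 H2 Hm [Ea Eb]]]]]]]] := (HPP (a, b)).2 Hab.
case: (Hm) => Hm1 Hm2 Hm3 Hm4.
have Hla : ks lam = kr a1 by rewrite (Hsrc _ _ H1).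
have Heb : ks eta = kr b1 by rewrite -(Hsrc _ _ H2).
have Hc1 : kc lam a1 = kc a (ks a) by rewrite kg_id_r Ea.
have Hc2 : kc eta b1 = kc b (ks b) by rewrite kg_id_r Eb.
have [ab1 Hab1] := common_ext_Lmin_ex Hla (esym (kr_ks a)) Hc1.
have [ab2 Hab2] := common_ext_Lmin_ex Heb (esym (kr_ks b)) Hc2.
case: (inS_Lmin_fst HP H1 Hab Hab1) => El Em; subst lam mu.
case: (inS_Lmin_snd HP H2 Hab Hab2) => Ex Ee; subst xi eta.
have Ha1 : kd a1 = zeroN k by apply: kc_fixed_deg0 Hla (esym Ea).
have Hb1 : kd b1 = zeroN k by apply: kc_fixed_deg0 Heb (esym Eb).
by rewrite -(kc_deg0r Hm1 Ha1) Hm3 (kc_deg0r Hm2 Hb1).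
Qed.

Lemma prodS_idempotent_diag P Q a b : Defs.idempotent P -> Defs.idempotent Q ->
  prodS P Q (a, b) -> a = b.
Proof.
move=> HP HQ [lam [mu [xi [eta [a1 [b1 [H1 H2 Hm [-> ->]]]]]]]].
by rewrite (idempotent_diag HP H1) -(idempotent_diag HQ H2); case: Hm.
Qed.

Definition aperiodic x := forall m n, leNI m (pd x) -> leNI n (pd x) ->
  peq (shift m x) (shift n x) -> m = n.

Lemma aperiodic_theta_diag x F lam mu : is_path x -> aperiodic x ->
  F (lam, mu) -> leNI (kd mu) (pd x) -> concat lam (shift (kd mu) x) x -> kd lam = kd mu.
Proof.
move=> Hx Ax HF Hmu Hc; have Hz := shift_is_path Hx Hmu.
have [Hl _] := concat_begins_with Hc.
exact: Ax _ _ Hl Hmu (concat_shift Hz Hx Hc).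
Qed.

Lemma prodS_single_r F mu : inS F -> F (mu, mu) ->
  forall ab, prodS F (single (mu, mu)) ab <-> prodS (single (mu, mu)) (single (mu, mu)) ab.
Proof.
move=> HS HF ab; split.
- case=> [l1 [m1 [xi [eta [a1 [b1 [H1 [-> ->] Hm ->]]]]]]].
  case: (inS_Lmin_snd HS H1 HF Hm) => El Em; subst l1 m1.
  by exists mu, mu, mu, mu, a1, b1.
- case=> [l1 [m1 [xi [eta [a1 [b1 [[-> ->] H2 Hm ->]]]]]]].
  by exists mu, mu, xi, eta, a1, b1.
Qed.

Lemma aperiodic_trivial_isotropy y : is_path y -> aperiodic y -> trivial_isotropy y.
Proof.
move=> Hy Ay F HS HD [lam [mu [HF Hmu Emu Hc]]].
have Ed := aperiodic_theta_diag Hy Ay HF Hmu Hc.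
have [_ El] := concat_begins_with Hc.
have Elm : lam = mu by rewrite -El Ed Emu.
subst lam.
have HDmu : inD (single (mu, mu)) y by exists mu, mu.
exists (single (mu, mu)); split => //; first exact: idempotent_single.
split; first exact: peq_refl.
exists (single (mu, mu)); split => //; first exact: idempotent_single.
exact: prodS_single_r.
Qed.

Lemma peq_shift_add y m n s : leNI (addN s m) (pd y) ->
  peq (shift m y) (shift n y) -> peq (shift (addN s m) y) (shift (addN s n) y).
Proof.
move=> Hsm Hpq; have Hm : leNI m (pd y) by apply: leNI_trans Hsm; apply: leN_addl.
have Hs : leNI s (pd (shift m y)) by rewrite /= leNI_subIN // addNC.
apply: peq_trans (peq_sym (shift_shift y s m)) _.
exact: peq_trans (peq_shift Hs Hpq) (shift_shift y s n).
Qed.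

Lemma shift_prepend rho z t : is_path z -> ks rho = prange z -> leNI t (pd z) ->
  peq (shift t z) (shift (addN t (kd rho)) (prepend rho z)).
Proof.
move=> Hz Hr Ht; apply: peq_trans (shift_shift _ t (kd rho)).
exact: peq_shift Ht (peq_sym (prepend_shift Hz Hr)).
Qed.

(* Shifting by [s] moves both [m] and [n] past [d(rho)], into [z]. *)
Lemma aperiodic_prepend rho z : is_path z -> ks rho = prange z -> aperiodic z ->
  aperiodic (prepend rho z).
Proof.
move=> Hz Hr Az m n Hm Hn Hpq; set y := prepend rho z.
have /leNIP Hm' := Hm; have /leNIP Hn' := Hn.
have Hfin i u : pd z i = Some u -> m i = n i.
  move=> Ea; have := congr1 (fun f : Ninf k => f i) (proj1 Hpq); have := Hm' i; have := Hn' i.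
  by rewrite /= !ffunE Ea /= => H1 H2 [E]; lia.
pose s : Nk k := [ffun i => kd rho i - minn (m i) (n i)].
have Hs p : leNI p (pd y) -> (forall i u, pd z i = Some u -> p i = m i) ->
    leNI (addN s p) (pd y).
  move=> /leNIP Hp Hpm; apply/leNIP => i; have := Hp i; rewrite /= !ffunE.
  by case E: (pd z i) => [u|] //=; have := Hpm i u E; have := Hfin i u E; lia.
have Hsm := Hs m Hm (fun _ _ _ => erefl).
have Hsn := Hs n Hn (fun i u E => esym (Hfin i u E)).
pose m' := subN (addN s m) (kd rho); pose n' := subN (addN s n) (kd rho).
have Em : addN m' (kd rho) = addN s m by apply: eqNP => i; rewrite !ffunE; lia.
have En : addN n' (kd rho) = addN s n by apply: eqNP => i; rewrite !ffunE; lia.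
have Q1 := shift_prepend Hz Hr (leNI_subN Hsm); rewrite -/m' Em in Q1.
have Q2 := shift_prepend Hz Hr (leNI_subN Hsn); rewrite -/n' En in Q2.
have Emn : m' = n'.
  apply: Az (leNI_subN Hsm) (leNI_subN Hsn) _.
  exact: peq_trans Q1 (peq_trans (peq_shift_add Hsm Hpq) (peq_sym Q2)).
by apply: (@addN_inj _ s); rewrite -Em -En Emn.
Qed.

End Isotropy.

Section IsotropyToAperiodic.
Variables (k : nat) (L : kgraph k).
Implicit Types (a b : L) (m n p : Nk k) (x : kpath L) (P : pairset L).

Notation "0" := (zeroN k).

Lemma peq_shift_vertex x m n : peq (shift m x) (shift n x) -> pm x m m = pm x n n.
Proof. by case=> _ /(_ 0 0 (leNn _) (leNI0 _)); rewrite /= !add0N. Qed.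

Lemma theta_single_shift x m n : is_path x -> leNI m (pd x) -> leNI n (pd x) ->
  peq (shift m x) (shift n x) -> theta_rel (single (pm x 0 m, pm x 0 n)) x x.
Proof.
move=> Hx Hm Hn Hpq; have Hvx := peq_shift_vertex Hpq.
have Hda := path_deg0 Hx Hm; have Hdb := path_deg0 Hx Hn.
exists (pm x 0 m), (pm x 0 n); rewrite Hdb; split => //; split.
- by rewrite prange_shift path_s ?le0N.
- rewrite Hda -(proj1 Hpq); apply/ffunP => i; rewrite !ffunE.
  by move/leNIP: Hm => /(_ i); case: (pd x i) => [c|] //= Hc; congr Some; lia.
- move=> p Hp Hpx; rewrite Hda in Hp *.
  rewrite (path_comp Hx (le0N _) Hp Hpx); congr kc.
  have Ep : addN (subN p m) m = p by rewrite addNC subNK.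
  have Hpm : leNI (subN p m) (pd (shift m x)) by rewrite /= leNI_subIN // Ep.
  by rewrite -((proj2 Hpq) _ _ (le0N _) Hpm) /= add0N Ep.
Qed.

(* The unit [P] and [single (a, b)] agree on some [P'] with [x] in [D_P']: the
   element of [P'] that [x] begins with extends [b], giving [a a1 = b a1]. *)
Lemma germ_unit_single_deg x a b P : is_path x -> ks a = ks b -> begins_with x b ->
  Defs.idempotent P -> germ_eq (single (a, b)) x P x -> kd a = kd b.
Proof.
move=> Hx Hab Hb HP [_ [P' [HP' [r1 [r2 [HP'r Hr Er]]] Heq]]].
have E12 := idempotent_diag HP' HP'r; subst r1.
have [[a1 b1] Hmin] := begins_with_Lmin Hx Hb (conj Hr Er).
have Hpr : prodS (single (a, b)) P' (kc a a1, kc r2 b1) by exists a, b, r2, r2, a1, b1.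
have Eq := prodS_idempotent_diag HP HP' ((Heq _).1 Hpr).
case: Hmin => Hm1 _ Hm3 _.
have Hc : ks a = kr a1 by rewrite Hab.
by apply: (@addN_injr _ (kd a1)); rewrite -kd_kc // Eq -Hm3 kd_kc.
Qed.

Lemma trivial_isotropy_aperiodic x : is_path x -> trivial_isotropy x -> aperiodic x.
Proof.
move=> Hx Tx m n Hm Hn Hpq.
have Hs : ks (pm x 0 m) = ks (pm x 0 n).
  by rewrite !path_s ?le0N // (peq_shift_vertex Hpq).
have HD : inD (single (pm x 0 m, pm x 0 n)) x.
  by exists (pm x 0 m), (pm x 0 n); rewrite path_deg0.
have Hb : begins_with x (pm x 0 n) by rewrite /begins_with path_deg0.
have [P [HP _ Hg]] := Tx _ (inS_single Hs) HD (theta_single_shift Hx Hm Hn Hpq).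
by have := germ_unit_single_deg Hx Hs Hb HP Hg; rewrite !path_deg0.
Qed.

End IsotropyToAperiodic.

Section EssentialFreeness.
Variables (k : nat) (L : kgraph k).
Implicit Types (a b c d l lam mu nu rho ga : L) (m n : Nk k) (x y z : kpath L).
Implicit Types (F : pairset L) (Bs : list (pairset L * bool)).

Notation "0" := (zeroN k).

Lemma inD_open F : inS F -> is_open (inD F).
Proof.
move=> HF x _ Hx; exists [:: (F, true)]; split; first by move=> B [<-|[]].
by split; [move=> B [<-|[]]|move=> y _ /(_ _ (or_introl erefl))].
Qed.

Lemma inD_common_bound x0 Bs : (forall B, List.In B Bs -> B.2 = true -> inD B.1 x0) ->
  exists n, leNI n (pd x0) /\ forall B, List.In B Bs -> B.2 = true ->
    exists lam mu, [/\ B.1 (lam, mu), leN (kd mu) n & pm x0 0 (kd mu) = mu].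
Proof.
elim: Bs => [|B Bs IH] H; first by exists 0; split => //; apply: leNI0.
have [n [Hn Hw]] := IH (fun B' HB' => H B' (or_intror HB')).
case HB: B.2; last first.
  by exists n; split => // B' [<-|HB']; [rewrite HB|apply: Hw].
have [lam [mu [H1 H2 H3]]] := H B (or_introl erefl) HB.
exists (joinN n (kd mu)); split; first exact: leNI_join.
move=> B' [<-|HB'] E'; first by exists lam, mu; split => //; apply: leN_joinr.
have [lam' [mu' [G1 G2 G3]]] := Hw B' HB' E'.
by exists lam', mu'; split => //; apply: leN_trans G2 (leN_joinl _ _).
Qed.

Lemma begins_with_Lmin_ext x mu nu a b : is_path x -> begins_with x mu ->
  Lmin mu nu (a, b) -> leNI (addN (kd mu) (kd a)) (pd x) ->
  pm x (kd mu) (addN (kd mu) (kd a)) = a -> begins_with x nu.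
Proof.
move=> Hx [_ Emu] [H1 H2 H3 H4] Hr Ea.
have Ex : pm x 0 (addN (kd mu) (kd a)) = kc nu b.
  by rewrite (path_comp Hx (le0N _) (leN_addr _ _) Hr) Emu Ea H3.
have Hdnu : leN (kd nu) (addN (kd mu) (kd a)) by rewrite -kd_kc // H4 leN_joinr.
split; first exact: leNI_trans Hdnu Hr.
by rewrite -(pre_path0 Hx Hdnu Hr) Ex pre_kc.
Qed.

Definition pairs_list F : list (L * L) :=
  epsilon (inhabits nil) (fun s => forall ab, F ab -> List.In ab s).

Lemma in_pairs_list F ab : inS F -> F ab -> List.In ab (pairs_list F).
Proof. by case=> HF _ _; move: ab; rewrite /pairs_list; epsilon_intro. Qed.

Definition excluded_ends Bs : list L :=
  pfilter (fun nu => exists B l, [/\ List.In B Bs, B.2 = false & B.1 (l, nu)])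
    (List.flat_map (fun B => List.map snd (pairs_list B.1)) Bs).

Lemma in_excluded_ends Bs nu : (forall B, List.In B Bs -> inS B.1) ->
  List.In nu (excluded_ends Bs) <->
  exists B l, [/\ List.In B Bs, B.2 = false & B.1 (l, nu)].
Proof.
move=> HBs; rewrite in_pfilter; split=> [[]|[B [l [HB HBf HF]]]] //.
split; last by exists B, l.
apply/List.in_flat_map; exists B; split => //.
by apply/List.in_map_iff; exists (l, nu); split => //; apply: in_pairs_list (HBs B HB) HF.
Qed.

Hypothesis FA : finitely_aligned L.

Lemma avoiding_ext x0 n Bs : is_boundary x0 -> leNI n (pd x0) ->
  (forall B, List.In B Bs -> inS B.1) -> in_basic Bs x0 ->
  exists ga, kr ga = ks (pm x0 0 n) /\
    forall a, List.In a (min_exts (pm x0 0 n) (excluded_ends Bs)) ->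
      forall ab, ~ Lmin a ga ab.
Proof.
move=> Bx0 Hn HBs Hin; have Hx0 := proj1 Bx0; set mu0 := pm x0 0 n.
have Hs0 : ks mu0 = pm x0 n n by rewrite path_s ?le0N.
have Hdm : kd mu0 = n by apply: path_deg0.
have Hb0 : begins_with x0 mu0 by split; rewrite Hdm.
rewrite Hs0; apply: boundary_avoid => // a.
  by move=> /(in_min_exts FA) [nu [b [_ [H _ _ _]]]]; rewrite -H.
move=> /(in_min_exts FA) [nu [b [/(in_excluded_ends _ HBs) [B [l [HB HBf HF]]] Hm]]] Hle Ea.
rewrite -Hdm in Hle Ea.
have [Hnu Enu] := begins_with_Lmin_ext Hx0 Hb0 Hm Hle Ea.
by have := Hin B HB; rewrite /in_subbasic HBf; apply; exists l, nu.
Qed.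

Lemma prepend_in_basic x0 n Bs ga z : is_path x0 -> leNI n (pd x0) ->
  (forall B, List.In B Bs -> inS B.1) ->
  (forall B, List.In B Bs -> B.2 = true ->
    exists lam mu, [/\ B.1 (lam, mu), leN (kd mu) n & pm x0 0 (kd mu) = mu]) ->
  kr ga = ks (pm x0 0 n) ->
  (forall a, List.In a (min_exts (pm x0 0 n) (excluded_ends Bs)) ->
    forall ab, ~ Lmin a ga ab) ->
  is_path z -> ks ga = prange z -> in_basic Bs (prepend (kc (pm x0 0 n) ga) z).
Proof.
move=> Hx0 Hn HBs Hw Hga Hav Hz Hgz; set mu0 := pm x0 0 n; set rho := kc mu0 ga.
have Hmg : ks mu0 = kr ga by [].
have Hr : ks rho = prange z by rewrite kg_comp_s.
have Hy := prepend_is_path Hz Hr.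
have Hby := concat_begins_with (prepend_concat Hz Hr).
move=> B HB; rewrite /in_subbasic; case HBf: B.2.
  have [lam [mu [H1 H2 H3]]] := Hw B HB HBf.
  have Hmr : leN (kd mu) (kd rho).
    by rewrite kd_kc // path_deg0 //; apply: leN_trans H2 (leN_addr _ _).
  have Ep : pre rho (kd mu) = mu.
    by rewrite pre_kcl ?path_deg0 // pre_path0.
  by have [] := begins_with_pre Hy Hby Hmr; rewrite Ep => ? ?; exists lam, mu.
move=> [l [nu [HF Hnu Enu]]].
have [c [d [Hc Hd E]]] := begins_with_common_ext Hy Hby (conj Hnu Enu).
have Hgc : ks ga = kr c by rewrite -Hc kg_comp_s.
have E3 : kc nu d = kc mu0 (kc ga c) by rewrite -kg_assoc // -E.
have Hmc : ks mu0 = kr (kc ga c) by rewrite kg_comp_r.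
have [c1 [d1 [e [Hm He Ede]]]] := common_ext_Lmin Hd Hmc E3.
have Hd1 : List.In d1 (min_exts mu0 (excluded_ends Bs)).
  apply/(in_min_exts FA); exists nu, c1; split; last exact: Lmin_sym.
  by apply/in_excluded_ends => //; exists B, l.
have [ab Hab] := common_ext_Lmin_ex He Hgc (esym Ede).
exact: Hav d1 Hd1 ab Hab.
Qed.

Lemma conditionA_essentially_free : conditionA L -> boundary_groupoid_essentially_free L.
Proof.
move=> CA U HU [x0 [Bx0 Ux0]]; have Hx0 := proj1 Bx0.
have [Bs [HBs [Hin Hsub]]] := HU x0 Hx0 Ux0.
have [n [Hn Hw]] : exists n, leNI n (pd x0) /\ forall B, List.In B Bs -> B.2 = true ->
    exists lam mu, [/\ B.1 (lam, mu), leN (kd mu) n & pm x0 0 (kd mu) = mu].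
  by apply: inD_common_bound => B HB HBt; have := Hin B HB; rewrite /in_subbasic HBt.
have [ga [Hga Hav]] := avoiding_ext Bx0 Hn HBs Hin.
have [z [Bz Rz Az]] := CA (ks ga) (kd_ks ga).
have Hz := proj1 Bz.
have Hgz : ks ga = prange z by rewrite Rz.
have Hr : ks (kc (pm x0 0 n) ga) = prange z by rewrite kg_comp_s.
exists (prepend (kc (pm x0 0 n) ga) z); split.
- exact: prepend_boundary.
- apply: Hsub; first exact: prepend_is_path.
  exact: prepend_in_basic Hx0 Hn HBs Hw Hga Hav Hz Hgz.
- by apply: aperiodic_trivial_isotropy; [apply: prepend_is_path|apply: aperiodic_prepend].
Qed.

Lemma essentially_free_conditionA : boundary_groupoid_essentially_free L -> conditionA L.
Proof.
move=> EF v Hv.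
have HU : is_open (inD (single (v, v))) by apply/inD_open/inS_single.
have [x0 [Bx0 Rx0]] := boundary_exists Hv.
have Ux0 : inD (single (v, v)) x0.
  by exists v, v; rewrite Hv; split; [by []|apply: leNI0|apply: Rx0].
have [x [Bx [l [mu [[_ ->] _ Ev]] Tx]]] := EF _ HU (ex_intro _ x0 (conj Bx0 Ux0)).
exists x; split => //; first by rewrite Hv in Ev.
exact: trivial_isotropy_aperiodic (proj1 Bx) Tx.
Qed.

End EssentialFreeness.

Theorem proposition7p2 (k : nat) (L : kgraph k) :
  finitely_aligned L ->
  (conditionA L <-> boundary_groupoid_essentially_free L).
Proof.
move=> FA; split; first exact: conditionA_essentially_free.
exact: essentially_free_conditionA.
Qed.
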